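(* Let $F$ be a hitting clause-set and $v$ a variable. Then $\mathrm{DP}_v(F)$ is a hitting clause-set.
   Context: Literals are variables $v$ and complements $\overline{v}$; a clause is a finite set of literals with no complementary pair; a clause-set is a finite set of clauses; for a set of literals $D$, $\overline{D}=\{\overline{y}:y\in D\}$. A clause-set $F$ is hitting if for all distinct $C,D\in F$ we have $C\cap\overline{D}\neq\emptyset$. $\mathrm{DP}_v(F) := \{C \in F : v \notin \mathrm{var}(C)\} \cup \{(C \cup D)\setminus\{v,\overline{v}\} : C, D \in F,\ C \cap \overline{D} = \{v\}\}$, where $\mathrm{var}(C)$ is the set of variables underlying the literals of $C$. *)

From HB Require Import structures.
From mathcomp Require Import all_boot.
From mathcomp Require Import finmap.
Set Implicit Arguments. Unset Strict Implicit. Unset Printing Implicit Defensive.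
Local Open Scope fset_scope.

Section Clauses.
Variable V : choiceType.

(* A literal is a pair (v, b): (v, true) is the variable v, (v, false) is its complement. *)
Definition lit := (V * bool)%type.
Definition posl (v : V) : lit := (v, true).
Definition negl (v : V) : lit := (v, false).
Definition litvar (x : lit) : V := x.1.
Definition complit (x : lit) : lit := (x.1, ~~ x.2).

Definition compl (D : {fset lit}) : {fset lit} := [fset complit y | y in D].
Definition var (C : {fset lit}) : {fset V} := [fset litvar y | y in C].

Definition is_clause (C : {fset lit}) : Prop := forall x, x \in C -> complit x \notin C.
Definition is_clause_set (F : {fset {fset lit}}) : Prop := forall C, C \in F -> is_clause C.

Definition hitting (F : {fset {fset lit}}) : Prop :=
  forall C D, C \in F -> D \in F -> C != D -> C `&` compl D != fset0.

Definition DP (v : V) (F : {fset {fset lit}}) : {fset {fset lit}} :=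
  [fset C in F | v \notin var C]
  `|` [fset (C `|` D) `\` [fset posl v; negl v] | C in F, D in F
         & C `&` compl D == [fset posl v]].

End Clauses.

(* Clauses of F that avoid v clash with every other clause of DP_v(F), since
   the clashing literal they share with a parent clause survives resolution.
   Two distinct resolvents have distinct parents on one side, say A ≠ A'
   (both containing v); these clash in some literal, and since clauses contain
   at most one literal per variable that literal is not on v, so it survives
   in both resolvents. *)

From mathcomp Require Import all_boot finmap.
Local Open Scope fset_scope.
Set Implicit Arguments. Unset Strict Implicit.

Section Literals.
Variable V : choiceType.
Implicit Types (C D : {fset lit V}) (x : lit V) (v : V).

Lemma complitK : involutive (@complit V).
Proof. by case=> a b; rewrite /complit /= negbK. Qed.

Lemma complit_neq x : complit x != x.
Proof. by case: x => a []; rewrite /complit /= xpair_eqE /= andbF. Qed.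

Lemma litvar_complit x : litvar (complit x) = litvar x.
Proof. by []. Qed.

Lemma in_compl x D : (x \in compl D) = (complit x \in D).
Proof. by rewrite -{1}(complitK x) /compl mem_imfset //; apply: can_inj complitK. Qed.

Lemma clashP C D :
  reflect (exists2 x, x \in C & complit x \in D) (C `&` compl D != fset0).
Proof.
apply: (iffP (fset0Pn _)) => [[x]|[x xC xD]]; last by exists x; rewrite inE in_compl xC.
by rewrite inE in_compl => /andP[]; exists x.
Qed.

Lemma clash_sym C D : C `&` compl D != fset0 -> D `&` compl C != fset0.
Proof. by case/clashP=> x xC xD; apply/clashP; exists (complit x); rewrite ?complitK. Qed.

Lemma notin_var v C x : v \notin var C -> x \in C -> litvar x != v.
Proof. by move/imfsetP=> vC xC; apply/eqP=> xv; apply: vC; exists x. Qed.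

Lemma clause_litvar_inj C x y :
  is_clause C -> x \in C -> y \in C -> litvar x = litvar y -> x = y.
Proof.
move=> clC; case: x => a b; case: y => a' b' xC yC /= eaa'; subst a'.
by case: b b' xC yC => [] [] // xC yC; have := clC _ xC; rewrite /complit /= yC.
Qed.

Lemma clash_litvar_neq C C' l x : is_clause C -> is_clause C' ->
  l \in C -> l \in C' -> x \in C -> complit x \in C' -> litvar x != litvar l.
Proof.
move=> clC clC' lC lC' xC xC'; apply/eqP => xl.
have xE := clause_litvar_inj clC xC lC xl.
have cxE := clause_litvar_inj clC' xC' lC' xl.
by have := complit_neq x; rewrite cxE xE eqxx.
Qed.

Definition resolvent v C D := (C `|` D) `\` [fset posl v; negl v].

Lemma resolventC v C D : resolvent v C D = resolvent v D C.
Proof. by rewrite /resolvent fsetUC. Qed.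

Lemma in_resolvent v C D x :
  (x \in resolvent v C D) = (litvar x != v) && ((x \in C) || (x \in D)).
Proof. by case: x => a []; rewrite !inE /posl /negl /litvar !xpair_eqE /= ?andbT ?andbF ?orbF. Qed.

Lemma single_clashP v C D : C `&` compl D == [fset posl v] ->
  [/\ posl v \in C, negl v \in D & forall x, x \in C -> complit x \in D -> x = posl v].
Proof.
move=> /eqP eCD.
have clashE x : (x \in C) && (complit x \in D) = (x == posl v).
  by rewrite -in_compl -in_fsetI eCD inE.
have /andP[pC nD] : (posl v \in C) && (complit (posl v) \in D) by rewrite clashE.
by split=> // x xC xD; apply/eqP; rewrite -clashE xC.
Qed.

Lemma resolvent_clause v C D : is_clause C -> is_clause D ->
  C `&` compl D == [fset posl v] -> is_clause (resolvent v C D).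
Proof.
move=> clC clD /single_clashP[_ _ onlyv] x.
rewrite !in_resolvent litvar_complit => /andP[xv /orP[xC|xD]]; rewrite xv /=;
  apply/negP => /orP[cxC|cxD].
- by have := clC _ xC; rewrite cxC.
- by move: xv; rewrite (onlyv _ xC cxD) eqxx.
- by move: xv; rewrite -litvar_complit (onlyv _ cxC) ?complitK ?eqxx.
- by have := clD _ xD; rewrite cxD.
Qed.

End Literals.

Section DPResolution.
Variables (V : choiceType) (v : V) (F : {fset {fset lit V}}).
Hypotheses (clF : is_clause_set F) (hitF : hitting F).
Implicit Types (C D R : {fset lit V}).

Lemma in_DP_cases R : R \in DP v F ->
  (R \in F /\ v \notin var R) \/
  exists C D, [/\ C \in F, D \in F, C `&` compl D == [fset posl v] & R = resolvent v C D].
Proof.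
rewrite inE => /orP[|/imfset2P[C /= CF [D /= /andP[DF eCD] ->]]].
  by rewrite !inE => /andP[]; left.
by right; exists C, D.
Qed.

Lemma kept_resolvent_clash R C D : R \in F -> v \notin var R ->
  C \in F -> D \in F -> C `&` compl D == [fset posl v] ->
  R `&` compl (resolvent v C D) != fset0.
Proof.
move=> RF vR CF DF /single_clashP[pC _ _].
have RC : R != C by apply: contraNneq vR => ->; apply/imfsetP; exists (posl v).
case/clashP: (hitF RF CF RC) => x xR xC; apply/clashP; exists x => //.
by rewrite in_resolvent litvar_complit (notin_var vR xR) xC.
Qed.

Lemma parents_clash_resolvents A A' B B' l : A \in F -> A' \in F ->
  l \in A -> l \in A' -> litvar l = v -> A != A' ->
  resolvent v A B `&` compl (resolvent v A' B') != fset0.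
Proof.
move=> AF AF' lA lA' lv nA; case/clashP: (hitF AF AF' nA) => x xA xA'.
have xl := clash_litvar_neq (clF AF) (clF AF') lA lA' xA xA'; rewrite lv in xl.
by apply/clashP; exists x; rewrite in_resolvent ?litvar_complit xl ?xA ?xA'.
Qed.

Lemma resolvents_clash C D C' D' :
  C \in F -> D \in F -> C' \in F -> D' \in F ->
  C `&` compl D == [fset posl v] -> C' `&` compl D' == [fset posl v] ->
  resolvent v C D != resolvent v C' D' ->
  resolvent v C D `&` compl (resolvent v C' D') != fset0.
Proof.
move=> CF DF CF' DF' /single_clashP[pC nD _] /single_clashP[pC' nD' _] neq.
have [eC|nC] := eqVneq C C'; last exact: parents_clash_resolvents pC pC' _ nC.
have nDD : D != D' by apply: contraNneq neq => eD; rewrite eC eD.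
by rewrite !(resolventC _ C) !(resolventC _ C'); apply: parents_clash_resolvents nD nD' _ nDD.
Qed.

End DPResolution.

Theorem lemma4 (V : choiceType) (F : {fset {fset lit V}}) (v : V) :
  is_clause_set F -> hitting F ->
  is_clause_set (DP v F) /\ hitting (DP v F).
Proof.
move=> clF hitF; split.
  move=> R /in_DP_cases[[RF _]|[C [D [CF DF eCD ->]]]]; first exact: clF.
  exact: resolvent_clause (clF _ CF) (clF _ DF) eCD.
move=> R R' /in_DP_cases[[RF vR]|[C [D [CF DF eCD ->]]]]
             /in_DP_cases[[RF' vR']|[C' [D' [CF' DF' eCD' ->]]]].
- exact: hitF.
- by move=> _; apply: (kept_resolvent_clash hitF RF vR CF' DF' eCD').
- by move=> _; apply/clash_sym/(kept_resolvent_clash hitF RF' vR' CF DF eCD).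
- exact: (resolvents_clash clF hitF CF DF CF' DF' eCD eCD').
Qed.
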